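(* In the algebra $\mathcal O_q$ defined in the context, the element $\tilde{\mathcal G}_1+qB_\delta$ is central, where $B_\delta=q^{-2}\mathcal W_1\mathcal W_0-\mathcal W_0\mathcal W_1$.
   Context: All algebras are associative and unital over a field $\mathbb F$; $q\in\mathbb F$ is nonzero and not a root of unity. For elements $X,Y$ of an algebra, $[X,Y]=XY-YX$ and $[X,Y]_q=qXY-q^{-1}YX$. Let $\rho=-(q^2-q^{-2})^2$. The algebra $\mathcal O_q$ is defined by generators $\mathcal W_{-k},\mathcal W_{k+1},\mathcal G_{k+1},\tilde{\mathcal G}_{k+1}$ ($k\in\mathbb N$) and the following relations for all $k,\ell\in\mathbb N$: $[\mathcal W_0,\mathcal W_{k+1}]=[\mathcal W_{-k},\mathcal W_1]=(\tilde{\mathcal G}_{k+1}-\mathcal G_{k+1})/(q+q^{-1})$; $[\mathcal W_0,\mathcal G_{k+1}]_q=[\tilde{\mathcal G}_{k+1},\mathcal W_0]_q=\rho\mathcal W_{-k-1}-\rho\mathcal W_{k+1}$; $[\mathcal G_{k+1},\mathcal W_1]_q=[\mathcal W_1,\tilde{\mathcal G}_{k+1}]_q=\rho\mathcal W_{k+2}-\rho\mathcal W_{-k}$; $[\mathcal W_{-k},\mathcal W_{-\ell}]=0$, $[\mathcal W_{k+1},\mathcal W_{\ell+1}]=0$; $[\mathcal W_{-k},\mathcal W_{\ell+1}]+[\mathcal W_{k+1},\mathcal W_{-\ell}]=0$; $[\mathcal W_{-k},\mathcal G_{\ell+1}]+[\mathcal G_{k+1},\mathcal W_{-\ell}]=0$;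 $[\mathcal W_{-k},\tilde{\mathcal G}_{\ell+1}]+[\tilde{\mathcal G}_{k+1},\mathcal W_{-\ell}]=0$; $[\mathcal W_{k+1},\mathcal G_{\ell+1}]+[\mathcal G_{k+1},\mathcal W_{\ell+1}]=0$; $[\mathcal W_{k+1},\tilde{\mathcal G}_{\ell+1}]+[\tilde{\mathcal G}_{k+1},\mathcal W_{\ell+1}]=0$; $[\mathcal G_{k+1},\mathcal G_{\ell+1}]=0$, $[\tilde{\mathcal G}_{k+1},\tilde{\mathcal G}_{\ell+1}]=0$; $[\tilde{\mathcal G}_{k+1},\mathcal G_{\ell+1}]+[\mathcal G_{k+1},\tilde{\mathcal G}_{\ell+1}]=0$. *)

From HB Require Import structures.
From mathcomp Require Import all_boot all_order all_algebra.
Set Implicit Arguments. Unset Strict Implicit. Unset Printing Implicit Defensive.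
Import GRing.Theory.
Local Open Scope ring_scope.

Definition comm (F : fieldType) (A : algType F) (X Y : A) : A := X * Y - Y * X.
Definition qcomm (F : fieldType) (A : algType F) (q : F) (X Y : A) : A :=
  q *: (X * Y) - q^-1 *: (Y * X).

Definition rho (F : fieldType) (q : F) : F := - (q ^+ 2 - q ^- 2) ^+ 2.

(* Indexing convention: Wm k = W_{-k}, Wp k = W_{k+1},
   G k = G_{k+1}, Gt k = \tilde G_{k+1}  (k : nat). *)
Definition Oq_relations (F : fieldType) (q : F) (A : algType F)
    (Wm Wp G Gt : nat -> A) : Prop :=
  let r := rho q in
  let c := (q + q^-1)^-1 in
  (forall k, comm (Wm 0%N) (Wp k) = c *: (Gt k - G k)) /\
  (forall k, comm (Wm k) (Wp 0%N) = c *: (Gt k - G k)) /\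
  (forall k, qcomm q (Wm 0%N) (G k) = r *: Wm k.+1 - r *: Wp k) /\
  (forall k, qcomm q (Gt k) (Wm 0%N) = r *: Wm k.+1 - r *: Wp k) /\
  (forall k, qcomm q (G k) (Wp 0%N) = r *: Wp k.+1 - r *: Wm k) /\
  (forall k, qcomm q (Wp 0%N) (Gt k) = r *: Wp k.+1 - r *: Wm k) /\
  (forall k l, comm (Wm k) (Wm l) = 0) /\
  (forall k l, comm (Wp k) (Wp l) = 0) /\
  (forall k l, comm (Wm k) (Wp l) + comm (Wp k) (Wm l) = 0) /\
  (forall k l, comm (Wm k) (G l) + comm (G k) (Wm l) = 0) /\
  (forall k l, comm (Wm k) (Gt l) + comm (Gt k) (Wm l) = 0) /\
  (forall k l, comm (Wp k) (G l) + comm (G k) (Wp l) = 0) /\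
  (forall k l, comm (Wp k) (Gt l) + comm (Gt k) (Wp l) = 0) /\
  (forall k l, comm (G k) (G l) = 0) /\
  (forall k l, comm (Gt k) (Gt l) = 0) /\
  (forall k l, comm (Gt k) (G l) + comm (G k) (Gt l) = 0).

Inductive gen_by (F : fieldType) (A : algType F) (Wm Wp G Gt : nat -> A)
  : A -> Prop :=
  | gen_Wm k : gen_by Wm Wp G Gt (Wm k)
  | gen_Wp k : gen_by Wm Wp G Gt (Wp k)
  | gen_G k : gen_by Wm Wp G Gt (G k)
  | gen_Gt k : gen_by Wm Wp G Gt (Gt k)
  | gen_one : gen_by Wm Wp G Gt 1
  | gen_scale (c : F) x : gen_by Wm Wp G Gt x -> gen_by Wm Wp G Gt (c *: x)
  | gen_add x y : gen_by Wm Wp G Gt x -> gen_by Wm Wp G Gt y ->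
                  gen_by Wm Wp G Gt (x + y)
  | gen_mul x y : gen_by Wm Wp G Gt x -> gen_by Wm Wp G Gt y ->
                  gen_by Wm Wp G Gt (x * y).

Definition Bdelta (F : fieldType) (q : F) (A : algType F) (Wm Wp : nat -> A) : A :=
  q ^- 2 *: (Wp 0%N * Wm 0%N) - Wm 0%N * Wp 0%N.

From HB Require Import structures.
From mathcomp Require Import all_boot all_order all_algebra.
Import GRing.Theory.
Local Open Scope ring_scope.

(* Since [q B_delta = - [W_0, W_1]_q], the element is [Z = G~_1 - [W_0, W_1]_q],
   and as [G_(k+1) = G~_(k+1) - (q + q^-1) [W_0, W_(k+1)]] it suffices to show
   that [Z] commutes with the [W]'s and the [G~]'s.
   For [W_(-k)] the q-Leibniz rule and [[W_0, W_(-k)] = 0] give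
   [[[W_0, W_1]_q, W_(-k)] = - [W_0, (G~_(k+1) - G_(k+1)) / (q + q^-1)]_q], and
   because [[W_0, G_(k+1)]_q = [G~_(k+1), W_0]_q] this is [[G~_(k+1), W_0]],
   which equals [[G~_1, W_(-k)]]; the case of [W_(k+1)] is symmetric.
   For [G~_(k+1)] a q-Jacobi identity expresses [[[W_0, W_1]_q, G~_(k+1)]]
   through [[W_1, G~_(k+1)]_q] and [[G~_(k+1), W_0]_q], that is, through
   commutators of [W]'s which cancel.  That q is not a root of unity is only
   used through [q + q^-1 != 0]. *)

Lemma subrACA (V : zmodType) (a b c d : V) : a - b - (c - d) = a - c - (b - d).
Proof. by rewrite -addrA -opprD addrCA opprD addrA. Qed.

Lemma subrDD_swap (V : zmodType) (a b c d : V) : a + b - (c + d) = (a - d) + (b - c).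
Proof. by rewrite opprD [- c + _]addrC addrACA. Qed.

Lemma addf_inv_neq0 {F : fieldType} {q : F} : q != 0 -> q ^+ 4 != 1 -> q + q^-1 != 0.
Proof.
move=> q0; apply: contra => /eqP qqV.
have q2 : q ^+ 2 = -1.
  by apply/eqP; rewrite -addr_eq0 -(mulfV q0) expr2 -mulrDr qqV mulr0.
by rewrite (exprM q 2 2) q2 sqrrN expr1n.
Qed.

Section Commutators.
Variables (F : fieldType) (A : algType F).
Implicit Types (q a : F) (x y z t g : A).

Lemma comm0_commr x y : comm x y = 0 -> GRing.comm x y.
Proof. by move/eqP; rewrite subr_eq0 => /eqP. Qed.

Lemma commrZ a x y : GRing.comm x y -> GRing.comm x (a *: y).
Proof. by rewrite /GRing.comm -scalerAr -scalerAl => ->. Qed.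

Lemma opp_comm x y : - comm x y = comm y x.
Proof. by rewrite /comm opprB. Qed.

Lemma commBl x y z : comm (x - y) z = comm x z - comm y z.
Proof. by rewrite /comm mulrBl mulrBr subrACA. Qed.

Lemma commBr x y z : comm x (y - z) = comm x y - comm x z.
Proof. by rewrite /comm mulrBl mulrBr subrACA. Qed.

Lemma commZl a x y : comm (a *: x) y = a *: comm x y.
Proof. by rewrite /comm scalerBr scalerAl scalerAr. Qed.

Lemma commZr a x y : comm x (a *: y) = a *: comm x y.
Proof. by rewrite /comm scalerBr scalerAr scalerAl. Qed.

Lemma commMl x y z : comm (x * y) z = x * comm y z + comm x z * y.
Proof. by rewrite /comm mulrBr mulrBl !mulrA addrA subrK. Qed.

Lemma commM_cyclic x y z : comm (x * y) z = comm x (y * z) + comm y (z * x).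
Proof. by rewrite /comm !mulrA addrA subrK. Qed.

Lemma qcomm0l q y : qcomm q 0 y = 0.
Proof. by rewrite /qcomm mul0r mulr0 !scaler0 subrr. Qed.

Lemma qcomm0r q x : qcomm q x 0 = 0.
Proof. by rewrite /qcomm mul0r mulr0 !scaler0 subrr. Qed.

Lemma qcommBl q x y z : qcomm q (x - y) z = qcomm q x z - qcomm q y z.
Proof. by rewrite /qcomm mulrBl mulrBr !scalerBr subrACA. Qed.

Lemma qcommBr q x y z : qcomm q x (y - z) = qcomm q x y - qcomm q x z.
Proof. by rewrite /qcomm mulrBl mulrBr !scalerBr subrACA. Qed.

Lemma qcommZl q a x y : qcomm q (a *: x) y = a *: qcomm q x y.
Proof.
by rewrite /qcomm -scalerAl -scalerAr scalerBr !scalerA [q * a]mulrC [q^-1 * a]mulrC.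
Qed.

Lemma qcommZr q a x y : qcomm q x (a *: y) = a *: qcomm q x y.
Proof.
by rewrite /qcomm -scalerAl -scalerAr scalerBr !scalerA [q * a]mulrC [q^-1 * a]mulrC.
Qed.

Lemma qcommNr q x y : qcomm q x (- y) = - qcomm q x y.
Proof. by rewrite -scaleN1r qcommZr scaleN1r. Qed.

Lemma qcomm_skew q x y : qcomm q x y - qcomm q y x = (q + q^-1) *: comm x y.
Proof. by rewrite /qcomm /comm scalerDl !scalerBr subrACA opprB. Qed.

Lemma comm_qcomml q x y z :
  comm (qcomm q x y) z = qcomm q x (comm y z) + qcomm q (comm x z) y.
Proof. by rewrite /qcomm commBl !commZl !commMl !scalerDr subrDD_swap. Qed.

Lemma comm_qcomm_jacobi q x y z :
  comm (qcomm q x y) z = comm x (qcomm q y z) + comm y (qcomm q z x).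
Proof.
rewrite /qcomm commBl !commBr !commZl !commZr !commM_cyclic !scalerDr.
by rewrite subrDD_swap.
Qed.

Lemma qcomm_normalized_diffr q x t g : q + q^-1 != 0 ->
  qcomm q x g = qcomm q t x -> qcomm q x ((q + q^-1)^-1 *: (t - g)) = comm x t.
Proof.
by move=> hq e; rewrite qcommZr qcommBr e qcomm_skew scalerA mulVf // scale1r.
Qed.

Lemma qcomm_normalized_diffl q y t g : q + q^-1 != 0 ->
  qcomm q g y = qcomm q y t -> qcomm q ((q + q^-1)^-1 *: (t - g)) y = comm t y.
Proof.
by move=> hq e; rewrite qcommZl qcommBl e qcomm_skew scalerA mulVf // scale1r.
Qed.

Lemma gen_by_comm (Wm Wp G Gt : nat -> A) z :
    (forall k, GRing.comm z (Wm k)) -> (forall k, GRing.comm z (Wp k)) ->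
    (forall k, GRing.comm z (G k)) -> (forall k, GRing.comm z (Gt k)) ->
  forall x, gen_by Wm Wp G Gt x -> GRing.comm z x.
Proof.
move=> zWm zWp zG zGt x.
elim=> {x} [k|k|k|k| |a x _ zx|x y _ zx _ zy|x y _ zx _ zy].
- exact: zWm.
- exact: zWp.
- exact: zG.
- exact: zGt.
- exact: commr1.
- exact: commrZ.
- exact: commrD.
- exact: commrM.
Qed.

Lemma scale_Bdelta q (Wm Wp : nat -> A) :
  q != 0 -> q *: Bdelta q Wm Wp = - qcomm q (Wm 0%N) (Wp 0%N).
Proof.
by move=> q0; rewrite /Bdelta /qcomm scalerBr scalerA expr2 invfM mulVKf // opprB.
Qed.

End Commutators.

Section OqCentralElement.
Variables (F : fieldType) (q : F) (A : algType F) (Wm Wp G Gt : nat -> A).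
Local Notation W0 := (Wm 0%N).
Local Notation W1 := (Wp 0%N).
Local Notation c := ((q + q^-1)^-1).
Local Notation r := (rho q).

Hypothesis qqV_neq0 : q + q^-1 != 0.
Hypothesis comm_W0_Wp : forall k, comm W0 (Wp k) = c *: (Gt k - G k).
Hypothesis comm_Wm_W1 : forall k, comm (Wm k) W1 = c *: (Gt k - G k).
Hypothesis qcomm_W0_G : forall k, qcomm q W0 (G k) = r *: Wm k.+1 - r *: Wp k.
Hypothesis qcomm_Gt_W0 : forall k, qcomm q (Gt k) W0 = r *: Wm k.+1 - r *: Wp k.
Hypothesis qcomm_G_W1 : forall k, qcomm q (G k) W1 = r *: Wp k.+1 - r *: Wm k.
Hypothesis qcomm_W1_Gt : forall k, qcomm q W1 (Gt k) = r *: Wp k.+1 - r *: Wm k.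
Hypothesis comm_Wm_Wm : forall k l, comm (Wm k) (Wm l) = 0.
Hypothesis comm_Wp_Wp : forall k l, comm (Wp k) (Wp l) = 0.
Hypothesis comm_Wm_Wp : forall k l, comm (Wm k) (Wp l) + comm (Wp k) (Wm l) = 0.
Hypothesis comm_Wm_Gt : forall k l, comm (Wm k) (Gt l) + comm (Gt k) (Wm l) = 0.
Hypothesis comm_Wp_Gt : forall k l, comm (Wp k) (Gt l) + comm (Gt k) (Wp l) = 0.
Hypothesis comm_Gt_Gt : forall k l, comm (Gt k) (Gt l) = 0.

Local Notation Z := (Gt 0%N - qcomm q W0 W1).

Lemma commr_Z_Wm k : GRing.comm Z (Wm k).
Proof.
apply: comm0_commr.
have Gt_Wm : comm (Gt 0%N) (Wm k) = comm (Gt k) W0.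
  by rewrite -opp_comm; apply: addr0_eq; apply: comm_Wm_Gt.
have qW_Wm : comm (qcomm q W0 W1) (Wm k) = comm (Gt k) W0.
  rewrite comm_qcomml comm_Wm_Wm qcomm0l addr0 -opp_comm comm_Wm_W1 qcommNr.
  by rewrite qcomm_normalized_diffr ?opp_comm // qcomm_W0_G qcomm_Gt_W0.
by rewrite commBl Gt_Wm qW_Wm subrr.
Qed.

Lemma commr_Z_Wp k : GRing.comm Z (Wp k).
Proof.
apply: comm0_commr.
have Gt_Wp : comm (Gt 0%N) (Wp k) = comm (Gt k) W1.
  by rewrite -opp_comm; apply: addr0_eq; apply: comm_Wp_Gt.
have qW_Wp : comm (qcomm q W0 W1) (Wp k) = comm (Gt k) W1.
  rewrite comm_qcomml comm_Wp_Wp qcomm0r add0r comm_W0_Wp.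
  by rewrite qcomm_normalized_diffl // qcomm_G_W1 qcomm_W1_Gt.
by rewrite commBl Gt_Wp qW_Wp subrr.
Qed.

Lemma commr_Z_Gt k : GRing.comm Z (Gt k).
Proof.
apply: comm0_commr.
rewrite commBl comm_Gt_Gt comm_qcomm_jacobi qcomm_W1_Gt qcomm_Gt_W0.
rewrite !commBr !commZr comm_Wm_Wm comm_Wp_Wp !scaler0 !subr0.
by rewrite -scalerDr comm_Wm_Wp scaler0 subrr.
Qed.

Lemma commr_Z_G k : GRing.comm Z (G k).
Proof.
have -> : G k = Gt k - (q + q^-1) *: comm W0 (Wp k).
  by rewrite comm_W0_Wp scalerA mulfV // scale1r opprB addrC subrK.
apply/commrB/commrZ/commrB; first exact: commr_Z_Gt.
  by apply: commrM; [apply: commr_Z_Wm | apply: commr_Z_Wp].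
by apply: commrM; [apply: commr_Z_Wp | apply: commr_Z_Wm].
Qed.

Lemma commr_Z_gen_by x : gen_by Wm Wp G Gt x -> GRing.comm Z x.
Proof.
apply: gen_by_comm.
- exact: commr_Z_Wm.
- exact: commr_Z_Wp.
- exact: commr_Z_G.
- exact: commr_Z_Gt.
Qed.

End OqCentralElement.

Theorem lemma11p3 (F : fieldType) (q : F)
    (hq0 : q != 0) (hroot : forall n : nat, (0 < n)%N -> q ^+ n != 1)
    (A : algType F) (Wm Wp G Gt : nat -> A) :
  Oq_relations q Wm Wp G Gt ->
  forall x : A, gen_by Wm Wp G Gt x ->
    (Gt 0%N + q *: Bdelta q Wm Wp) * x = x * (Gt 0%N + q *: Bdelta q Wm Wp).
Proof.
move=> [? [? [? [? [? [? [? [? [? [_ [? [_ [? [_ [? _]]]]]]]]]]]]]]] x gen_x.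
rewrite scale_Bdelta //; apply: commr_Z_gen_by => //.
exact: addf_inv_neq0 hq0 (hroot 4%N isT).
Qed.
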